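(* For $s \in J$ and $f \in Y$, the stochastic process $(V(s,t)f)_{t \in J(s)}$ is adapted to the augmented filtration \[ \mathcal{F}_t(s):=\sigma \left[x_{n \wedge N_s(t)}(s), T_{n \wedge N_s(t)}(s) : n \in \mathbb{N} \right] \vee \sigma(\mathbb{P}\text{-null sets}), \qquad t\in J(s), \] i.e. $V(s,t)f$ is $\mathcal F_t(s)$–Borel$(Y)$ measurable for every $t\in J(s)$.
   Context: $(Y,\|\cdot\|)$ is a real separable Banach space with Borel $\sigma$-algebra $\mathcal Y$; $J$ is $\mathbb{R}^+$ or $[0,T_\infty]$, $\Delta_J=\{(s,t)\in J^2:s\le t\}$, $J(s)=\{t\in J:t\ge s\}$. An inhomogeneous $Y$-semigroup is a map $\Gamma:\Delta_J\to\mathcal B(Y)$ with $\Gamma(t,t)=I$ and $\Gamma(s,r)\Gamma(r,t)=\Gamma(s,t)$ for $s\le r\le t$. Let $(\Omega,\mathcal F,\mathbb P)$ be a complete probability space, $X$ a finite set with $\sigma$-algebra $\mathcal X$ of all subsets, $(x_n)_{n\ge0}$ $X$-valued and $(\tau_n)_{n\ge1}$ $(0,\infty)$-valued random variables, $\tau_0=0$, $T_n=\sum_{k=0}^n\tau_k$, such that $(x_n,T_n)$ is a Markov renewal process: there is a semi-Markov kernel $Q$ with $\mathbb P[x_{n+1}=y,T_{n+1}-T_n\le t\mid x_k,T_k,k\le n]=Q(x_n,y,t)$ a.s. Let $N(t)=\sup\{n:T_n\le t\}$; $\Omega$ is replaced by the full-measure event $\{N(t)<\infty\ \forall t\in\mathbb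 Q\}$ (with restricted $\sigma$-algebra and probability). Set $x(t)=x_{N(t)}$, and for $s\le t$: $N_s(t)=N(t)-N(s)$, $T_0(s)=s$, $T_n(s)=T_{N(s)+n}$ for $n\ge1$, $x_n(s)=x(T_n(s))$. Let $(\Gamma_x)_{x\in X}$ be inhomogeneous $Y$-semigroups such that for each $s\in J$, $(r,t,x,f)\mapsto\Gamma_x(r\wedge t,r\vee t)f$ is $\mathrm{Bor}(J(s))\otimes\mathrm{Bor}(J(s))\otimes\mathcal X\otimes\mathcal Y$–$\mathcal Y$ measurable, and $(D(x,y))_{x,y\in X}\subseteq\mathcal B(Y)$ contractions ($\|D(x,y)\|\le1$) with $(x,y,f)\mapsto D(x,y)f$ measurable. The inhomogeneous random evolution is defined pathwise for $(s,t)\in\Delta_J$ by $V(s,t)=\Big[\prod_{k=1}^{N_s(t)}\Gamma_{x_{k-1}(s)}(T_{k-1}(s),T_k(s))D(x_{k-1}(s),x_k(s))\Big]\Gamma_{x(t)}(T_{N_s(t)}(s),t)$, where the product is ordered left to right ($\prod_{k=1}^nA_k=A_1\cdots A_n$) and the empty product is $I$. *)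

From HB Require Import structures.
From mathcomp Require Import all_boot all_order all_algebra.
From mathcomp Require Import all_classical all_reals all_analysis.
Import Order.TTheory GRing.Theory Num.Theory numFieldNormedType.Exports.

Set Implicit Arguments.
Unset Strict Implicit.
Unset Printing Implicit Defensive.

Local Open Scope classical_set_scope.
Local Open Scope ring_scope.

Definition borel_sets (T : topologicalType) : set (set T) :=
  <<s [set A | open A] >>.

Definition separable_space (T : topologicalType) : Prop :=
  exists D : set T, countable D /\ dense D.

Definition bounded_linear (R : realType) (Y : normedModType R) (f : Y -> Y) :=
  (forall (a : R) (u v : Y), f (a *: u + v) = a *: f u + f v) /\
  exists M : R, forall u, `|f u| <= M * `|u|.

Definition inhom_semigroup (R : realType) (Y : normedModType R) (J : set R)
    (G : R -> R -> Y -> Y) : Prop :=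
  [/\ (forall s t, J s -> J t -> s <= t -> bounded_linear (G s t)),
      (forall t, J t -> G t t = id) &
      (forall s r t, J s -> J r -> J t -> s <= r -> r <= t ->
         G s r \o G r t = G s t)].

Definition Jfrom (R : realType) (J : set R) (s : R) : set R :=
  [set t | J t /\ s <= t].

Definition semigroup_family_measurable (R : realType) (Y : normedModType R)
    (X : finType) (J : set R) (Gam : X -> R -> R -> Y -> Y) : Prop :=
  forall s, J s ->
  let Js := Jfrom J s in
  let Dom := [set z : R * R * X * Y | Js z.1.1.1 /\ Js z.1.1.2] in
  forall C, borel_sets C ->
    <<s Dom, [set A | exists (A1 A2 : set R) (S : set X) (B : set Y),
              [/\ measurable A1 /\ A1 `<=` Js, measurable A2 /\ A2 `<=` Js,
                  borel_sets B &
                  A = [set z | A1 z.1.1.1 /\ A2 z.1.1.2 /\ S z.1.2 /\ B z.2]]] >>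
      (Dom `&` [set z | C (Gam z.1.2 (Num.min z.1.1.1 z.1.1.2)
                                     (Num.max z.1.1.1 z.1.1.2) z.2)]).

Definition jump_family_measurable (R : realType) (Y : normedModType R)
    (X : finType) (Dop : X -> X -> Y -> Y) : Prop :=
  forall C, borel_sets C ->
    <<s [set A | exists (S1 S2 : set X) (B : set Y), borel_sets B /\
            A = [set z : X * X * Y | S1 z.1.1 /\ S2 z.1.2 /\ B z.2]] >>
      [set z | C (Dop z.1.1 z.1.2 z.2)].

(** T_n = sum_{k=0}^n tau_k  (with tau_0 = 0) *)
Definition Tsum (R : realType) (Omega : Type) (tau : nat -> Omega -> R)
    (n : nat) (w : Omega) : R :=
  \sum_(0 <= k < n.+1) tau k w.

Definition semi_Markov_kernel (R : realType) (X : finType) (Q : X -> X -> R -> R)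
    : Prop :=
  [/\ (forall x y t, 0 <= Q x y t),
      (forall x y, {homo Q x y : a b / a <= b}),
      (forall x y t, Q x y t' @[t' --> t^'+] --> Q x y t),
      (forall x y, Q x y 0 = 0) &
      (forall x, \sum_(y : X) Q x y t @[t --> +oo] --> (1 : R))].

Definition history_sigma (R : realType) (Omega : Type) (X : finType)
    (x : nat -> Omega -> X) (T : nat -> Omega -> R) (n : nat) : set (set Omega) :=
  <<s [set A | exists k, (k <= n)%N /\
        ((exists S : set X, A = x k @^-1` S) \/
         (exists B : set R, measurable B /\ A = T k @^-1` B))] >>.

(** P[x_{n+1} = y, T_{n+1} - T_n <= t | x_k, T_k, k <= n] = Q(x_n, y, t) a.s.,
    written in the defining form of conditional probability. *)
Definition markov_renewal (R : realType) (d : measure_display)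
    (Omega : measurableType d) (P : probability Omega R) (X : finType)
    (x : nat -> Omega -> X) (T : nat -> Omega -> R) (Q : X -> X -> R -> R) : Prop :=
  forall n (A : set Omega) (y : X) (t : R), history_sigma x T n A ->
    P (A `&` [set w | x n.+1 w = y /\ T n.+1 w - T n w <= t]) =
    (\int[P]_(w in A) (Q (x n w) y t)%:E)%E.

(** N(t) = sup {n : T_n <= t}  (the maximum, which exists when the set is
    bounded, as is the case on the restricted Omega). *)
Definition Ncount (R : realType) (Omega : Type) (T : nat -> Omega -> R)
    (t : R) (w : Omega) : nat :=
  xget 0%N [set n | T n w <= t /\ forall m, T m w <= t -> (m <= n)%N].

Definition xproc (R : realType) (Omega : Type) (X : finType)
    (x : nat -> Omega -> X) (T : nat -> Omega -> R) (t : R) (w : Omega) : X :=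
  x (Ncount T t w) w.

Definition Nst (R : realType) (Omega : Type) (T : nat -> Omega -> R)
    (s t : R) (w : Omega) : nat :=
  (Ncount T t w - Ncount T s w)%N.

Definition Ts (R : realType) (Omega : Type) (T : nat -> Omega -> R)
    (s : R) (n : nat) (w : Omega) : R :=
  if n is 0 then s else T (Ncount T s w + n)%N w.

Definition xs (R : realType) (Omega : Type) (X : finType)
    (x : nat -> Omega -> X) (T : nat -> Omega -> R) (s : R) (n : nat)
    (w : Omega) : X :=
  xproc x T (Ts T s n w) w.

(** The inhomogeneous random evolution, applied to f:
    V(s,t) f = [prod_{k=1}^{N_s(t)} Gamma_{x_{k-1}(s)}(T_{k-1}(s),T_k(s))
                 D(x_{k-1}(s),x_k(s))] Gamma_{x(t)}(T_{N_s(t)}(s),t) f,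
    the product being ordered left to right. *)
Definition random_evolution (R : realType) (Y : normedModType R) (Omega : Type)
    (X : finType) (x : nat -> Omega -> X) (T : nat -> Omega -> R)
    (Gam : X -> R -> R -> Y -> Y) (Dop : X -> X -> Y -> Y)
    (s t : R) (w : Omega) (f : Y) : Y :=
  let n := Nst T s t w in
  foldr (fun k g =>
           Gam (xs x T s k.-1 w) (Ts T s k.-1 w) (Ts T s k w)
               (Dop (xs x T s k.-1 w) (xs x T s k w) g))
        (Gam (xproc x T t w) (Ts T s n w) t f)
        (iota 1 n).

Definition null_sets (R : realType) (d : measure_display)
    (Omega : measurableType d) (P : probability Omega R) : set (set Omega) :=
  [set A | exists B, [/\ measurable B, P B = 0%E & A `<=` B]].

Definition augmented_filtration (R : realType) (d : measure_display)
    (Omega : measurableType d) (P : probability Omega R) (X : finType)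
    (x : nat -> Omega -> X) (T : nat -> Omega -> R) (s t : R) : set (set Omega) :=
  <<s [set A | exists n : nat,
         (exists S : set X,
            A = (fun w => xs x T s (minn n (Nst T s t w)) w) @^-1` S) \/
         (exists B : set R, measurable B /\
            A = (fun w => Ts T s (minn n (Nst T s t w)) w) @^-1` B)]
      `|` null_sets P >>.

From HB Require Import structures.
From mathcomp Require Import all_boot all_order all_algebra.
From mathcomp Require Import all_classical all_reals all_analysis.
Import Order.TTheory GRing.Theory Num.Theory numFieldNormedType.Exports.

(* Proof idea: on the event {N_s(t) = m}, V(s,t)f is a fixed composition of
   measurable maps applied to the stopped jump times T_{k /\ N_s(t)}(s) and
   stopped states x_{k /\ N_s(t)}(s), k <= m.  Because the jump times are
   strictly increasing, {N_s(t) >= k} is the event that the k-th stopped time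
   exceeds the (k-1)-th, so these events are measurable in the stopped
   variables as well.  Hence V(s,t)f is a countable patching of F_t(s)-measurable
   maps. *)

Set Implicit Arguments.
Unset Strict Implicit.
Unset Printing Implicit Defensive.

Local Open Scope classical_set_scope.
Local Open Scope ring_scope.

Lemma eq_in_foldr (A : eqType) (B : Type) (F1 F2 : A -> B -> B) (b : B) (l : seq A) :
  (forall a, a \in l -> F1 a =1 F2 a) -> foldr F1 b l = foldr F2 b l.
Proof.
elim: l => //= a l IH eqF; rewrite eqF ?mem_head // IH // => a' la'.
by apply: eqF; rewrite in_cons la' orbT.
Qed.

Section StoppedEvolution.
Variables (R : realType) (Y : normedModType R) (Omega : Type) (X : finType).
Variables (x : nat -> Omega -> X) (T : nat -> Omega -> R).
Variables (Gam : X -> R -> R -> Y -> Y) (Dop : X -> X -> Y -> Y) (s t : R).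

Definition Ts_stopped (k : nat) (w : Omega) : R := Ts T s (minn k (Nst T s t w)) w.

Definition xs_stopped (k : nat) (w : Omega) : X := xs x T s (minn k (Nst T s t w)) w.

Definition stopped_step (w : Omega) (k : nat) (g : Y) : Y :=
  Gam (xs_stopped k.-1 w) (Ts_stopped k.-1 w) (Ts_stopped k w)
      (Dop (xs_stopped k.-1 w) (xs_stopped k w) g).

(* V(s,t)f computed as if N_s(t) were m, from the variables stopped at N_s(t). *)
Definition stopped_evolution (m : nat) (w : Omega) (f : Y) : Y :=
  foldr (stopped_step w) (Gam (xs_stopped m w) (Ts_stopped m w) t f) (iota 1 m).

End StoppedEvolution.

Section RenewalTimes.
Variables (R : realType) (Omega : Type).

Lemma Tsum0 (tau : nat -> Omega -> R) w : Tsum tau 0 w = tau 0%N w.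
Proof. by rewrite /Tsum big_nat1. Qed.

Lemma Tsum_lt (tau : nat -> Omega -> R) :
  (forall n w, (0 < n)%N -> 0 < tau n w) ->
  forall w m n, (m < n)%N -> Tsum tau m w < Tsum tau n w.
Proof.
move=> tau_pos w.
apply: (@homo_ltn _ (fun n => Tsum tau n w) <%R) => [y x z|n]; first exact: lt_trans.
by rewrite /Tsum (big_nat_recr n.+1) //= ltrDl tau_pos.
Qed.

End RenewalTimes.

Section TimeInterval.
Variables (R : realType) (J : set R).
Hypothesis J_interval :
  J = [set t | 0 <= t] \/ exists Tinf : R, J = [set t | 0 <= t <= Tinf].

Lemma interval_ge0 a : J a -> 0 <= a.
Proof. by case: J_interval => [->|[Tinf ->]] //= /andP[]. Qed.

Lemma Jfrom_between s t a : J s -> Jfrom J s t -> s <= a <= t -> Jfrom J s a.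
Proof.
move=> Js [Jt st] /andP[sa at_]; split => //.
have a0 := le_trans (interval_ge0 Js) sa.
by case: J_interval Jt => [->|[Tinf ->]] //= /andP[_ tT]; rewrite a0 (le_trans at_ tT).
Qed.

End TimeInterval.

Section CountingProcess.
Variables (R : realType) (Omega : Type) (T : nat -> Omega -> R).
Hypothesis T_incr : forall w m n, (m < n)%N -> T m w < T n w.
Hypothesis T0 : forall w, T 0%N w = 0.
Hypothesis T_fin : forall w t, exists K : nat, forall n, T n w <= t -> (n <= K)%N.

Lemma T_le w m n : (m <= n)%N -> T m w <= T n w.
Proof. by rewrite leq_eqVlt => /orP[/eqP->//|/T_incr/ltW]. Qed.

Lemma T_ge0 w n : 0 <= T n w.
Proof. by rewrite -(T0 w); exact: T_le. Qed.

Lemma NcountP t w : 0 <= t ->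
  T (Ncount T t w) w <= t /\ forall m, T m w <= t -> (m <= Ncount T t w)%N.
Proof.
move=> t0; rewrite /Ncount.
suff : exists n, (fun n => T n w <= t /\ forall m, T m w <= t -> (m <= n)%N) n.
  by move=> /(xgetPex 0%N).
have T0_le : exists n, T n w <= t by exists 0%N; rewrite T0.
have [M leM] := T_fin w t.
by have [n Tn nmax] := ex_maxnP T0_le leM; exists n.
Qed.

Lemma Ncount_geE t w n : 0 <= t -> (n <= Ncount T t w)%N = (T n w <= t).
Proof.
move=> t0; have [TN Nmax] := NcountP w t0.
by apply/idP/idP => [/(T_le w) /le_trans -> //|/Nmax].
Qed.

Lemma le_Ncount s t w : 0 <= s -> s <= t -> (Ncount T s w <= Ncount T t w)%N.
Proof.
move=> s0 st; rewrite Ncount_geE ?(le_trans s0)//.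
by apply: le_trans st; have [] := NcountP w s0.
Qed.

Lemma Ncount_T n w : Ncount T (T n w) w = n.
Proof.
have [TN Nmax] := NcountP w (T_ge0 w n).
apply/eqP; rewrite eqn_leq (Nmax n (lexx _)) andbT leqNgt.
by apply/negP => /(T_incr w); rewrite ltNge TN.
Qed.

Variables (s t : R).
Hypotheses (s0 : 0 <= s) (st : s <= t).

Lemma Ncount_addNst w : (Ncount T s w + Nst T s t w)%N = Ncount T t w.
Proof. by rewrite /Nst subnKC // le_Ncount. Qed.

Lemma Ts_gt k w : (0 < k)%N -> s < Ts T s k w.
Proof.
case: k => // k _ /=.
by rewrite ltNge -Ncount_geE // -ltnNge -addn1 leq_add2l.
Qed.

Lemma Ts_bounds k w : (k <= Nst T s t w)%N -> s <= Ts T s k w <= t.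
Proof.
case: k => [|k] le_k; first by rewrite /= lexx st.
rewrite ltW ?Ts_gt //= -Ncount_geE ?(le_trans s0) //.
by rewrite -(Ncount_addNst w) leq_add2l.
Qed.

Lemma Ts_lt k w : (k < Nst T s t w)%N -> Ts T s k w < Ts T s k.+1 w.
Proof. by case: k => [|k] lt_k; [exact: Ts_gt | apply: T_incr; rewrite ltn_add2l]. Qed.

Lemma Ts_le i j w : (i <= j <= Nst T s t w)%N -> Ts T s i w <= Ts T s j w.
Proof.
elim: j => [|j IH]; first by rewrite leqn0 => /andP[/eqP->].
case/andP; rewrite leq_eqVlt => /orP[/eqP->//|]; rewrite ltnS => le_ij lt_j.
by apply: le_trans (ltW (Ts_lt lt_j)); apply: IH; rewrite le_ij ltnW.
Qed.

Lemma xproc_Nst (X : finType) (x : nat -> Omega -> X) w :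
  xproc x T t w = xs x T s (Nst T s t w) w.
Proof.
rewrite /xs /xproc; case E: (Nst T s t w) => [|n] /=.
  by move: (Ncount_addNst w); rewrite E addn0 => ->.
by rewrite -E Ncount_addNst Ncount_T.
Qed.

Lemma Ts_stopped_bounds k w : s <= Ts_stopped T s t k w <= t.
Proof. by apply: Ts_bounds; exact: geq_minr. Qed.

Lemma Ts_stopped_le a b w : (a <= b)%N -> Ts_stopped T s t a w <= Ts_stopped T s t b w.
Proof.
move=> le_ab; apply: Ts_le; rewrite geq_minr andbT leq_min geq_minr andbT.
exact: leq_trans (geq_minl _ _) le_ab.
Qed.

Lemma random_evolution_stopped (Y : normedModType R) (X : finType)
    (x : nat -> Omega -> X) (Gam : X -> R -> R -> Y -> Y) (Dop : X -> X -> Y -> Y) w f :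
  random_evolution x T Gam Dop s t w f =
  stopped_evolution x T Gam Dop s t (Nst T s t w) w f.
Proof.
rewrite /random_evolution /stopped_evolution /Ts_stopped /xs_stopped.
rewrite (xproc_Nst x) minnn; apply: eq_in_foldr => k.
rewrite mem_iota add1n ltnS => /andP[_ le_kN] g.
by rewrite /stopped_step /Ts_stopped /xs_stopped (minn_idPl le_kN)
  (minn_idPl (leq_trans (leq_pred k) le_kN)).
Qed.

End CountingProcess.

Section MeasurableComposition.
Variables (d : measure_display) (M : measurableType d).

Definition measurable_wrt (Z : Type) (B : set (set Z)) (g : M -> Z) : Prop :=
  forall A, B A -> measurable (g @^-1` A).

Lemma measurable_wrt_cst (Z : Type) (B : set (set Z)) (c : Z) :
  measurable_wrt B (fun _ => c).
Proof.
move=> A _; have [Ac|nAc] := pselect (A c).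
  by rewrite (_ : _ @^-1` A = setT) //; apply/seteqP; split.
by rewrite (_ : _ @^-1` A = set0) //; apply/seteqP; split.
Qed.

Lemma measurable_wrt_smallest (Z : Type) (D : set Z) (G : set (set Z)) (g : M -> Z) :
  (forall w, D (g w)) -> measurable_wrt G g -> measurable_wrt <<s D, G >> g.
Proof.
move=> Dg mg; apply: (smallest_sub (X := [set A | measurable (g @^-1` A)])) => //.
split => /=.
- by rewrite preimage_set0.
- move=> B mB; rewrite (_ : _ @^-1` _ = ~` (g @^-1` B)); first exact: measurableC.
  by apply/seteqP; split => w /=; [case | split; [exact: Dg|]].
- by move=> F mF; rewrite preimage_bigcup; exact: bigcupT_measurable.
Qed.

Variables (R : realType) (Y : normedModType R) (X : finType).

Lemma measurable_semigroup_family_comp (J : set R) (Gam : X -> R -> R -> Y -> Y) s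
    (r u : M -> R) (z : M -> X) (g : M -> Y) :
  semigroup_family_measurable J Gam -> J s ->
  (forall w, Jfrom J s (r w)) -> (forall w, Jfrom J s (u w)) ->
  (forall w, r w <= u w) -> measurable_fun setT r -> measurable_fun setT u ->
  measurable_wrt setT z -> measurable_wrt (@borel_sets Y) g ->
  measurable_wrt (@borel_sets Y) (fun w => Gam (z w) (r w) (u w) (g w)).
Proof.
move=> mGam Js Jr Ju le_ru mr mu mz mg C BC.
have := mGam s Js C BC => /=; set Dom := [set _ | _]; set Gen := [set _ | _].
move/(measurable_wrt_smallest (g := fun w => (r w, u w, z w, g w))).
have -> : (fun w => (r w, u w, z w, g w)) @^-1` (Dom `&` [set v | C
    (Gam v.1.2 (Num.min v.1.1.1 v.1.1.2) (Num.max v.1.1.1 v.1.1.2) v.2)]) =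
    (fun w => Gam (z w) (r w) (u w) (g w)) @^-1` C.
  apply/seteqP; split => w /=; rewrite (min_idPl (le_ru w)) (max_idPr (le_ru w)).
    by case.
  by move=> Cw; split=> //; split; [exact: Jr | exact: Ju].
apply=> [w|A [A1 [A2 [S [B [[mA1 _] [mA2 _] BB ->]]]]]]; first by split; [exact: Jr | exact: Ju].
rewrite (_ : _ @^-1` _ =
  r @^-1` A1 `&` (u @^-1` A2 `&` (z @^-1` S `&` g @^-1` B))) //.
apply: measurableI; first by rewrite -[r @^-1` A1]setTI; exact: mr.
apply: measurableI; first by rewrite -[u @^-1` A2]setTI; exact: mu.
by apply: measurableI; [exact: mz | exact: mg].
Qed.

Lemma measurable_jump_family_comp (Dop : X -> X -> Y -> Y)
    (z1 z2 : M -> X) (g : M -> Y) :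
  jump_family_measurable Dop ->
  measurable_wrt setT z1 -> measurable_wrt setT z2 -> measurable_wrt (@borel_sets Y) g ->
  measurable_wrt (@borel_sets Y) (fun w => Dop (z1 w) (z2 w) (g w)).
Proof.
move=> mDop mz1 mz2 mg C BC.
apply: (measurable_wrt_smallest (g := fun w => (z1 w, z2 w, g w)) _ _ (mDop C BC)) => //.
move=> A [S1 [S2 [B [BB ->]]]].
rewrite (_ : _ @^-1` _ = z1 @^-1` S1 `&` (z2 @^-1` S2 `&` g @^-1` B)) //.
by apply: measurableI; [exact: mz1 | apply: measurableI; [exact: mz2 | exact: mg]].
Qed.

End MeasurableComposition.

Section AdaptedEvolution.
Variables (d : measure_display) (M : measurableType d).
Variables (R : realType) (Y : normedModType R) (X : finType).
Variables (x : nat -> M -> X) (T : nat -> M -> R) (J : set R).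
Variables (Gam : X -> R -> R -> Y -> Y) (Dop : X -> X -> Y -> Y) (s t : R).
Hypothesis T_incr : forall w m n, (m < n)%N -> T m w < T n w.
Hypothesis T0 : forall w, T 0%N w = 0.
Hypothesis T_fin : forall w t, exists K : nat, forall n, T n w <= t -> (n <= K)%N.
Hypotheses (s0 : 0 <= s) (st : s <= t) (Js : J s).
Hypothesis J_between : forall a, s <= a <= t -> Jfrom J s a.
Hypothesis measurable_Gam : semigroup_family_measurable J Gam.
Hypothesis measurable_Dop : jump_family_measurable Dop.
Hypothesis measurable_Ts_stopped : forall k, measurable_fun setT (Ts_stopped T s t k).
Hypothesis measurable_xs_stopped : forall k, measurable_wrt setT (xs_stopped x T s t k).

Lemma measurable_Nst_ge k : measurable [set w | (k <= Nst T s t w)%N].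
Proof.
case: k => [|k].
  by rewrite (_ : [set _ | _] = setT) //; apply/seteqP; split.
rewrite (_ : [set _ | _] = setT `&`
    (Ts_stopped T s t k.+1 \- Ts_stopped T s t k) @^-1` `]0, +oo[%classic).
  exact: (measurable_realfun.measurable_funB (measurable_Ts_stopped _)
    (measurable_Ts_stopped _) measurableT (measurable_itv _)).
apply/seteqP; split => w /=; rewrite in_itv /= andbT subr_gt0 /Ts_stopped.
  move=> lt_kN; split=> //; rewrite (minn_idPl (ltnW lt_kN)) (minn_idPl lt_kN).
  exact: (Ts_lt T_incr T0 T_fin s0 lt_kN).
case=> _; case: (ltnP k (Nst T s t w)) => // le_Nk.
by rewrite (minn_idPr (leqW le_Nk)) ltxx.
Qed.

Lemma measurable_stopped_foldr (l : seq nat) (b : M -> Y) :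
  measurable_wrt (@borel_sets Y) b ->
  measurable_wrt (@borel_sets Y)
    (fun w => foldr (stopped_step x T Gam Dop s t w) (b w) l).
Proof.
elim: l => //= k l IH mb.
apply: (measurable_semigroup_family_comp measurable_Gam Js) => //.
- by move=> w; apply: J_between; exact: Ts_stopped_bounds.
- by move=> w; apply: J_between; exact: Ts_stopped_bounds.
- by move=> w; apply: Ts_stopped_le => //; exact: leq_pred.
- exact: measurable_jump_family_comp (IH mb).
Qed.

Lemma measurable_stopped_evolution m f :
  measurable_wrt (@borel_sets Y) (fun w => stopped_evolution x T Gam Dop s t m w f).
Proof.
apply: measurable_stopped_foldr.
apply: (measurable_semigroup_family_comp measurable_Gam Js) => //.
- by move=> w; apply: J_between; exact: Ts_stopped_bounds.
- by move=> w; apply: J_between; rewrite st lexx.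
- by move=> w; have /andP[] := Ts_stopped_bounds T_incr T0 T_fin s0 st m w.
- exact: measurable_wrt_cst.
Qed.

Lemma measurable_random_evolution f :
  measurable_wrt (@borel_sets Y) (fun w => random_evolution x T Gam Dop s t w f).
Proof.
move=> C BC.
rewrite (_ : _ @^-1` C = \bigcup_m (([set w | (m <= Nst T s t w)%N] `\`
    [set w | (m.+1 <= Nst T s t w)%N]) `&`
    (fun w => stopped_evolution x T Gam Dop s t m w f) @^-1` C)).
  apply: bigcupT_measurable => m; apply: measurableI.
    by apply: measurableD; exact: measurable_Nst_ge.
  exact: measurable_stopped_evolution.
apply/seteqP; split => w /=; rewrite random_evolution_stopped //.
  by move=> Cw; exists (Nst T s t w) => //=; rewrite ltnn.
move=> [m _ [[le_mN /negP]]]; rewrite -leqNgt => le_Nm.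
by have -> : Nst T s t w = m by apply/eqP; rewrite eqn_leq le_Nm.
Qed.

End AdaptedEvolution.

Theorem proposition3p2
  (R : realType) (Y : completeNormedModType R)
  (J : set R)
  (hJ : J = [set t | 0 <= t] \/ exists Tinf : R, J = [set t | 0 <= t <= Tinf])
  (hYsep : separable_space Y)
  (d : measure_display) (Omega : measurableType d) (P : probability Omega R)
  (hPcomplete : measure_is_complete P)
  (X : finType)
  (x : nat -> Omega -> X) (tau : nat -> Omega -> R)
  (hx_meas : forall n (S : set X), measurable (x n @^-1` S))
  (htau_meas : forall n, measurable_fun setT (tau n))
  (htau0 : forall w, tau 0%N w = 0)
  (htau_pos : forall n w, (0 < n)%N -> 0 < tau n w)
  (Q : X -> X -> R -> R) (hQ : semi_Markov_kernel Q)
  (hMRP : markov_renewal P x (Tsum tau) Q)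
  (hNfinite : forall w (t : R), exists M : nat,
      forall n, Tsum tau n w <= t -> (n <= M)%N)
  (Gam : X -> R -> R -> Y -> Y)
  (hGam : forall z, inhom_semigroup J (Gam z))
  (hGam_meas : semigroup_family_measurable J Gam)
  (Dop : X -> X -> Y -> Y)
  (hDop : forall z1 z2, bounded_linear (Dop z1 z2))
  (hDop_contr : forall z1 z2 (f : Y), `|Dop z1 z2 f| <= `|f|)
  (hDop_meas : jump_family_measurable Dop) :
  forall s, J s -> forall (f : Y) (t : R), Jfrom J s t ->
  forall C : set Y, borel_sets C ->
    augmented_filtration P x (Tsum tau) s t
      ((fun w => random_evolution x (Tsum tau) Gam Dop s t w f) @^-1` C).
Proof.
move=> s Js f t Jst C BC; have [_ st] := Jst.
have T0 w : Tsum tau 0 w = 0 by rewrite Tsum0.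
rewrite /augmented_filtration; set G := (X in <<s X >>).
apply: (@measurable_random_evolution _ (g_sigma_algebraType G) _ _ _ _ _ J)
  => //; first exact: Tsum_lt.
- exact: interval_ge0 Js.
- by move=> a; exact: Jfrom_between.
- move=> k _ B mB; rewrite setTI; apply: sub_sigma_algebra.
  by left; exists k; right; exists B.
- by move=> k S _; apply: sub_sigma_algebra; left; exists k; left; exists S.
Qed.
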